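(* Let $\varphi$ be any forecasting system (not necessarily computable or non-degenerate) and $\omega\in\Omega$. If $\omega$ is Schnorr test random for $\varphi$, then $\omega$ is Schnorr random for $\varphi$.
   Context: Notation: $\mathbb N_0=\{0,1,\dots\}$; $\Omega=\{0,1\}^{\mathbb N}$; $\mathbb S$ finite binary strings, $\square$ empty string, $|s|$ length, $\omega^n$ first $n$ entries of $\omega$; $[s]=\{\omega:\omega^{|s|}=s\}$, $[A]=\bigcup_{s\in A}[s]$; for $A\subseteq\mathbb N_0\times\mathbb S$, $A_n=\{s:(n,s)\in A\}$, $A_n^{<\ell}=\{s\in A_n:|s|<\ell\}$. $\mathcal I$: nonempty closed subintervals of $[0,1]$; $\overline E_I(f)=\max_{p\in I}[pf(1)+(1-p)f(0)]$. Forecasting system: any $\varphi:\mathbb S\to\mathcal I$. Supermartingale for $\varphi$: $M:\mathbb S\to\mathbb R$ with $\overline E_{\varphi(s)}(M(s\,\cdot))\le M(s)$ for all $s$; test supermartingale: non-negative with $M(\square)=1$. $\overline P_\varphi(G)=\inf\{M(\square):M\text{ supermartingale for }\varphi,\ \liminf_nM(\omega^n)\ge\mathbb 1_G(\omega)\ \forall\omega\}$. A real map $r:\mathbb S\to\mathbb R$ is computable if there is a recursive $q:\mathbb S\times\mathbb N_0\to\mathbb Q$ with $|r(s)-q(s,N)|\le2^{-N}$. A growth function is a recursive, non-decreasing, unbounded $\rho:\mathbb N_0\to\mathbb N_0$. $\omega$ is Schnorr random for $\varphi$ if $\limsup_n[T(\omega^n)-\rho(n)]\le0$ for all computable test supermartingales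 $T$ for $\varphi$ and all growth functions $\rho$. A Schnorr test for $\varphi$ is a recursive $A\subseteq\mathbb N_0\times\mathbb S$ with $\overline P_\varphi([A_n])\le2^{-n}$ for all $n$ and a recursive $e:\mathbb N_0^2\to\mathbb N_0$ with $\overline P_\varphi([A_n]\setminus[A_n^{<\ell}])\le2^{-N}$ for all $(N,n)$ and all $\ell\ge e(N,n)$. $\omega$ is Schnorr test random if $\omega\notin\bigcap_n[A_n]$ for all Schnorr tests $A$ for $\varphi$. *)

From Stdlib Require Import Reals List Arith ZArith QArith Qreals.
From Coquelicot Require Import Coquelicot.
Import ListNotations.
Open Scope R_scope.

Inductive rcode : Type :=
| RZero : rcode
| RSucc : rcode
| RProj : nat -> rcode
| RComp : rcode -> list rcode -> rcode
| RPrimRec : rcode -> rcode -> rcode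
| RMu : rcode -> rcode.

Inductive reval : rcode -> list nat -> nat -> Prop :=
| ev_zero : forall v, reval RZero v 0
| ev_succ : forall x v, reval RSucc (x :: v) (S x)
| ev_proj : forall i v, (i < length v)%nat -> reval (RProj i) v (nth i v 0%nat)
| ev_comp : forall f gs v ys y,
    reval_list gs v ys -> reval f ys y -> reval (RComp f gs) v y
| ev_prec0 : forall f g v y, reval f v y -> reval (RPrimRec f g) (0%nat :: v) y
| ev_precS : forall f g n v y z,
    reval (RPrimRec f g) (n :: v) y -> reval g (n :: y :: v) z ->
    reval (RPrimRec f g) (S n :: v) z
| ev_mu : forall f v y,
    reval f (y :: v) 0 ->
    (forall k, (k < y)%nat -> exists m, reval f (k :: v) (S m)) ->
    reval (RMu f) v y
with reval_list : list rcode -> list nat -> list nat -> Prop :=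
| evl_nil : forall v, reval_list [] v []
| evl_cons : forall g gs v y ys,
    reval g v y -> reval_list gs v ys -> reval_list (g :: gs) v (y :: ys).

Definition recursive (f : nat -> nat) : Prop :=
  exists c : rcode, forall n, reval c [n] (f n).

Definition npair (a b : nat) : nat := ((a + b) * (a + b + 1)) / 2 + b.

(* Binary strings: bijection list bool -> nat. *)
Fixpoint senc (s : list bool) : nat :=
  match s with
  | [] => 0
  | b :: t => 2 * senc t + (if b then 2 else 1)
  end.

(* Integers and positives, hence (syntactic) rationals: bijections into nat. *)
Definition zenc (z : Z) : nat :=
  match z with
  | Z0 => 0
  | Zpos p => 2 * Pos.to_nat p
  | Zneg p => 2 * Pos.to_nat p - 1
  end.
Definition qenc (q : Q) : nat := npair (zenc (Qnum q)) (Pos.to_nat (Qden q) - 1).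

Definition recursive_set_NS (A : nat -> list bool -> bool) : Prop :=
  exists F, recursive F /\
    forall n s, F (npair n (senc s)) = (if A n s then 1%nat else 0%nat).

Definition recursive_NN (e : nat -> nat -> nat) : Prop :=
  exists F, recursive F /\ forall a b, F (npair a b) = e a b.

Definition recursive_SNQ (q : list bool -> nat -> Q) : Prop :=
  exists F, recursive F /\ forall s N, F (npair (senc s) N) = qenc (q s N).

Definition computable_real_map (r : list bool -> R) : Prop :=
  exists q : list bool -> nat -> Q, recursive_SNQ q /\
    forall s N, Rabs (r s - Q2R (q s N)) <= / 2 ^ N.

Definition growth_function (rho : nat -> nat) : Prop :=
  recursive rho /\ (forall m n, (m <= n)%nat -> (rho m <= rho n)%nat) /\
  (forall B, exists n, (B <= rho n)%nat).

Definition Omega := nat -> bool.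

Definition prefix (w : Omega) (n : nat) : list bool := map w (seq 0 n).

Definition cyl (B : list bool -> Prop) (w : Omega) : Prop :=
  exists s, B s /\ prefix w (length s) = s.

Record interval := mkI {
  ilo : R; ihi : R;
  ilo_ge0 : 0 <= ilo; ilo_le_ihi : ilo <= ihi; ihi_le1 : ihi <= 1 }.

Definition forecasting_system := list bool -> interval.

(* Upper expectation bar E_I(f) <= c, i.e. max_{p in I} [p f(1) + (1-p) f(0)] <= c. *)
Definition upper_exp_le (I : interval) (f : bool -> R) (c : R) : Prop :=
  forall p, ilo I <= p <= ihi I -> p * f true + (1 - p) * f false <= c.

Definition supermartingale (phi : forecasting_system) (M : list bool -> R) : Prop :=
  forall s, upper_exp_le (phi s) (fun x => M (s ++ [x])) (M s).

Definition test_supermartingale (phi : forecasting_system) (M : list bool -> R) : Prop :=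
  supermartingale phi M /\ (forall s, 0 <= M s) /\ M [] = 1.

Definition upper_prob_set (phi : forecasting_system) (G : Omega -> Prop) (v : R) : Prop :=
  exists M, supermartingale phi M /\
    (forall w, Rbar_le (Finite 0) (LimInf_seq (fun n => M (prefix w n))) /\
               (G w -> Rbar_le (Finite 1) (LimInf_seq (fun n => M (prefix w n))))) /\
    v = M [].

Definition upper_prob (phi : forecasting_system) (G : Omega -> Prop) : Rbar :=
  Glb_Rbar (upper_prob_set phi G).

Definition schnorr_random (phi : forecasting_system) (w : Omega) : Prop :=
  forall T rho, test_supermartingale phi T -> computable_real_map T ->
    growth_function rho ->
    Rbar_le (LimSup_seq (fun n => T (prefix w n) - INR (rho n))) (Finite 0).

Definition sec (A : nat -> list bool -> bool) (n : nat) : list bool -> Prop :=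
  fun s => A n s = true.
Definition sec_lt (A : nat -> list bool -> bool) (n l : nat) : list bool -> Prop :=
  fun s => A n s = true /\ (length s < l)%nat.

Definition schnorr_test (phi : forecasting_system)
    (A : nat -> list bool -> bool) (e : nat -> nat -> nat) : Prop :=
  recursive_set_NS A /\ recursive_NN e /\
  (forall n, Rbar_le (upper_prob phi (cyl (sec A n))) (Finite (/ 2 ^ n))) /\
  (forall N n l, (e N n <= l)%nat ->
     Rbar_le (upper_prob phi (fun w => cyl (sec A n) w /\ ~ cyl (sec_lt A n l) w))
             (Finite (/ 2 ^ N))).

Definition schnorr_test_random (phi : forecasting_system) (w : Omega) : Prop :=
  forall A e, schnorr_test phi A e -> ~ (forall n, cyl (sec A n) w).

(* Suppose [w] is Schnorr test random for [phi], but some computable test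
   supermartingale [T] and growth function [rho] have
   [limsup (T (w^n) - rho n) > 0], so that [T (w^k) > rho k] infinitely often.
   Let [q] approximate [T] to precision 1 and put
     A_n = { s | rho |s| >= 2^n + 3  and  q s 0 > rho |s| - 2 },
     e(N, n) = the least [l] with [rho l >= 2^N + 3].
   Every [s] in [A_n] has [T s > rho |s| - 3 >= 2^n], and every [s] in [A_n] of
   length at least [e(N, n)] has [T s >= 2^N]; so Ville's inequality (a test
   supermartingale reaches level [c >= 1] with upper probability at most [1/c],
   witnessed by the supermartingale stopped at that level) gives both bounds of a
   Schnorr test.  [A] and [e] are recursive, by a small library of closure
   properties of mu-recursive functions developed first (arithmetic, inverting the
   pairing and string codes, minimisation).  Since [T (w^k) > rho k] for
   arbitrarily large [k], [w] lies in every [[A_n]], a contradiction. *)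

From Coquelicot Require Import Coquelicot.
From Stdlib Require Import Reals List Arith Lia ZArith QArith Qreals Lra.
From Stdlib Require Import ClassicalEpsilon Classical.
Import ListNotations.
Open Scope nat_scope.

Definition prim (k : nat) (f : list nat -> nat) : Prop :=
  exists c, forall v, length v = k -> reval c v (f v).

Definition prim1 (g : nat -> nat) : Prop := prim 1 (fun v => g (nth 0 v 0)).
Definition prim2 (g : nat -> nat -> nat) : Prop :=
  prim 2 (fun v => g (nth 0 v 0) (nth 1 v 0)).

Lemma recursive_prim1 h : prim1 h <-> recursive h.
Proof.
  split.
  - intros [c Hc]; exists c; intros n; exact (Hc [n] eq_refl).
  - intros [c Hc]; exists c; intros [|x [|]] Hv; simpl in Hv; try lia; apply Hc.
Qed.

Lemma prim_ext k f g : (forall v, length v = k -> f v = g v) -> prim k f -> prim k g.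
Proof. intros E [c Hc]; exists c; intros v Hv; rewrite <- E by auto; auto. Qed.

Lemma prim_proj k i : i < k -> prim k (fun v => nth i v 0).
Proof. intros H; exists (RProj i); intros v Hv; constructor; lia. Qed.

Lemma prim_app1 k g f : prim1 g -> prim k f -> prim k (fun v => g (f v)).
Proof.
  intros [cg Hg] [cf Hf]; exists (RComp cg [cf]); intros v Hv.
  econstructor; [repeat constructor; auto | exact (Hg [f v] eq_refl)].
Qed.

Lemma prim_app2 k g f1 f2 :
  prim2 g -> prim k f1 -> prim k f2 -> prim k (fun v => g (f1 v) (f2 v)).
Proof.
  intros [cg Hg] [c1 H1] [c2 H2]; exists (RComp cg [c1; c2]); intros v Hv.
  econstructor; [repeat constructor; auto | exact (Hg [f1 v; f2 v] eq_refl)].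
Qed.

Lemma prim_succ k f : prim k f -> prim k (fun v => S (f v)).
Proof.
  apply prim_app1.
  exists RSucc; intros [|x [|]] Hv; simpl in Hv; try lia; constructor.
Qed.

Lemma prim_const k c : prim k (fun _ => c).
Proof.
  induction c as [|c IH]; [exists RZero; intros; constructor | exact (prim_succ _ _ IH)].
Qed.

Definition prec (f : list nat -> nat) (g : list nat -> nat) (v : list nat) : nat :=
  match v with
  | [] => 0
  | n :: w => nat_rec (fun _ => nat) (f w) (fun i acc => g (i :: acc :: w)) n
  end.

Lemma prim_prec k f g : prim k f -> prim (S (S k)) g -> prim (S k) (prec f g).
Proof.
  intros [cf Hf] [cg Hg]. exists (RPrimRec cf cg).
  intros [|n w] Hv; simpl in Hv; [lia|]. injection Hv as Hv.
  induction n; simpl.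
  - constructor; auto.
  - econstructor; [exact IHn|]. apply Hg; simpl; lia.
Qed.

(* The least zero of [g] (0 if [g] has no zero); chosen classically. *)
Lemma least_zero_exists (g : nat -> nat) : (exists y, g y = 0) ->
  exists y, g y = 0 /\ forall k, k < y -> g k <> 0.
Proof.
  intros [n Hn]. revert Hn. induction n as [n IH] using lt_wf_ind. intros Hn.
  destruct (classic (exists k, k < n /\ g k = 0)) as [[k [Hk1 Hk2]]|Hno].
  - exact (IH k Hk1 Hk2).
  - exists n; split; auto. intros k Hk E; apply Hno; eauto.
Qed.

Definition least_zero (g : nat -> nat) : nat :=
  match excluded_middle_informative (exists y, g y = 0) with
  | left H => proj1_sig (constructive_indefinite_description _ (least_zero_exists g H))
  | right _ => 0
  end.

Lemma least_zero_spec g : (exists y, g y = 0) ->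
  g (least_zero g) = 0 /\ forall k, k < least_zero g -> g k <> 0.
Proof.
  intros H. unfold least_zero.
  destruct excluded_middle_informative as [H'|H']; [|tauto].
  destruct constructive_indefinite_description; simpl; auto.
Qed.

Lemma least_zero_unique g y : g y = 0 -> (forall k, k < y -> g k <> 0) -> least_zero g = y.
Proof.
  intros H1 H2. destruct (least_zero_spec g) as [A B]; [eauto|].
  destruct (lt_eq_lt_dec (least_zero g) y) as [[l|e]|l]; auto.
  - exfalso; exact (H2 _ l A).
  - exfalso; exact (B _ l H1).
Qed.

Lemma prim_mu k f : prim (S k) f -> (forall v, exists y, f (y :: v) = 0) ->
  prim k (fun v => least_zero (fun y => f (y :: v))).
Proof.
  intros [c Hc] Hex. exists (RMu c). intros v Hv.
  destruct (least_zero_spec (fun y => f (y :: v)) (Hex v)) as [Hzero Hleast].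
  constructor.
  - rewrite <- Hzero. apply Hc; simpl; lia.
  - intros j Hj. specialize (Hleast j Hj).
    destruct (f (j :: v)) as [|m] eqn:E; [contradiction|].
    exists m; rewrite <- E; apply Hc; simpl; lia.
Qed.

Lemma prim2_add : prim2 Nat.add.
Proof.
  apply prim_ext with (f := prec (fun w => nth 0 w 0) (fun w => S (nth 1 w 0))).
  - intros [|n [|x [|]]] Hv; simpl in Hv; try lia. simpl. induction n; simpl; lia.
  - apply prim_prec; [apply prim_proj | apply prim_succ, prim_proj]; lia.
Qed.

Lemma prim_add k f g : prim k f -> prim k g -> prim k (fun v => f v + g v).
Proof. exact (prim_app2 k _ f g prim2_add). Qed.

Lemma prim2_mul : prim2 Nat.mul.
Proof.
  apply prim_ext with (f := prec (fun _ => 0) (fun w => nth 1 w 0 + nth 2 w 0)).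
  - intros [|n [|x [|]]] Hv; simpl in Hv; try lia. simpl. induction n; simpl; lia.
  - apply prim_prec; [apply prim_const | apply prim_add; apply prim_proj; lia].
Qed.

Lemma prim_mul k f g : prim k f -> prim k g -> prim k (fun v => f v * g v).
Proof. exact (prim_app2 k _ f g prim2_mul). Qed.

Lemma prim1_pred : prim1 pred.
Proof.
  apply prim_ext with (f := prec (fun _ => 0) (fun w => nth 0 w 0)).
  - intros [|n [|]] Hv; simpl in Hv; try lia. destruct n; reflexivity.
  - apply prim_prec; [apply prim_const | apply prim_proj; lia].
Qed.

Lemma prim2_sub_flip : prim2 (fun n x => x - n).
Proof.
  apply prim_ext with (f := prec (fun w => nth 0 w 0) (fun w => pred (nth 1 w 0))).
  - intros [|n [|x [|]]] Hv; simpl in Hv; try lia. simpl. induction n; simpl; lia.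
  - apply prim_prec; [apply prim_proj; lia | apply (prim_app1 _ _ _ prim1_pred), prim_proj; lia].
Qed.

Lemma prim_sub k f g : prim k f -> prim k g -> prim k (fun v => f v - g v).
Proof. intros Hf Hg. exact (prim_app2 k _ g f prim2_sub_flip Hg Hf). Qed.

Lemma prim1_pow2 : prim1 (Nat.pow 2).
Proof.
  apply prim_ext with (f := prec (fun _ => 1) (fun w => nth 1 w 0 + nth 1 w 0)).
  - intros [|n [|]] Hv; simpl in Hv; try lia. simpl. induction n; simpl; lia.
  - apply prim_prec; [apply prim_const | apply prim_add; apply prim_proj; lia].
Qed.

Lemma prim_pow2 k f : prim k f -> prim k (fun v => 2 ^ f v).
Proof. exact (prim_app1 k _ f prim1_pow2). Qed.

Fixpoint tri (n : nat) : nat := match n with 0 => 0 | S i => tri i + S i end.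

Lemma prim1_tri : prim1 tri.
Proof.
  apply prim_ext with (f := prec (fun _ => 0) (fun w => nth 1 w 0 + S (nth 0 w 0))).
  - intros [|n [|]] Hv; simpl in Hv; try lia. simpl. induction n; simpl; lia.
  - apply prim_prec; [apply prim_const | apply prim_add; [|apply prim_succ]; apply prim_proj; lia].
Qed.

Lemma prim_tri k f : prim k f -> prim k (fun v => tri (f v)).
Proof. exact (prim_app1 k _ f prim1_tri). Qed.

Fixpoint evenb (n : nat) : nat := match n with 0 => 1 | S i => 1 - evenb i end.

Lemma prim1_evenb : prim1 evenb.
Proof.
  apply prim_ext with (f := prec (fun _ => 1) (fun w => 1 - nth 1 w 0)).
  - intros [|n [|]] Hv; simpl in Hv; try lia. simpl.
    induction n; simpl in *; [reflexivity|]. rewrite IHn. reflexivity.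
  - apply prim_prec; [apply prim_const | apply prim_sub; [apply prim_const | apply prim_proj; lia]].
Qed.

Lemma prim_evenb k f : prim k f -> prim k (fun v => evenb (f v)).
Proof. exact (prim_app1 k _ f prim1_evenb). Qed.

Lemma prim_recursive k h f : recursive h -> prim k f -> prim k (fun v => h (f v)).
Proof. intros Hh. apply prim_app1, recursive_prim1, Hh. Qed.

(* Inverting the Cantor pairing: [npair a b = tri (a + b) + b], and [a + b] is
   recovered as the least [z] with [npair a b < tri (z + 1)]. *)
Lemma npair_tri a b : npair a b = tri (a + b) + b.
Proof.
  assert (Hdouble : forall n, 2 * tri n = n * (n + 1)) by (induction n; simpl; lia).
  unfold npair. f_equal. rewrite <- Hdouble, Nat.mul_comm. apply Nat.div_mul. lia.
Qed.

Lemma tri_mono a b : a <= b -> tri a <= tri b.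
Proof. induction 1; simpl; lia. Qed.

Lemma tri_ge n : n <= tri n.
Proof. induction n; simpl; lia. Qed.

Definition unpair_sum (m : nat) : nat := least_zero (fun z => S m - tri (S z)).
Definition unpair2 (m : nat) : nat := m - tri (unpair_sum m).
Definition unpair1 (m : nat) : nat := unpair_sum m - unpair2 m.

Lemma unpair_sum_npair a b : unpair_sum (npair a b) = a + b.
Proof.
  rewrite npair_tri. unfold unpair_sum. apply least_zero_unique.
  - cbn [tri]. lia.
  - intros k Hk. assert (tri (S k) <= tri (a + b)) by (apply tri_mono; lia). lia.
Qed.

Lemma unpair1_npair a b : unpair1 (npair a b) = a.
Proof. unfold unpair1, unpair2. rewrite unpair_sum_npair, npair_tri. lia. Qed.

Lemma unpair2_npair a b : unpair2 (npair a b) = b.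
Proof. unfold unpair2. rewrite unpair_sum_npair, npair_tri. lia. Qed.

Lemma prim_unpair_sum k f : prim k f -> prim k (fun v => unpair_sum (f v)).
Proof.
  apply prim_app1. unfold unpair_sum.
  apply (prim_mu 1 (fun v => S (nth 1 v 0) - tri (S (nth 0 v 0)))).
  - apply prim_sub; [apply prim_succ | apply prim_tri, prim_succ]; apply prim_proj; lia.
  - intros v. exists (nth 0 v 0). cbn [nth tri]. pose proof (tri_ge (nth 0 v 0)). lia.
Qed.

Lemma prim_unpair2 k f : prim k f -> prim k (fun v => unpair2 (f v)).
Proof. intros Hf. apply prim_sub; [|apply prim_tri, prim_unpair_sum]; auto. Qed.

Lemma prim_unpair1 k f : prim k f -> prim k (fun v => unpair1 (f v)).
Proof. intros Hf. apply prim_sub; [apply prim_unpair_sum | apply prim_unpair2]; auto. Qed.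

(* The length of a string can be read off its code: [2^|s| <= senc s + 1 < 2^(|s|+1)],
   so [|s|] is the least [L] with [senc s + 2 <= 2^(L+1)]. *)
Definition code_length (k : nat) : nat := least_zero (fun L => (k + 2) - 2 ^ S L).

Lemma senc_bounds s : 2 ^ length s <= senc s + 1 /\ senc s + 2 <= 2 ^ S (length s).
Proof. induction s as [|[] t IH]; simpl in *; lia. Qed.

Lemma code_length_senc s : code_length (senc s) = length s.
Proof.
  unfold code_length. destruct (senc_bounds s) as [H1 H2]. apply least_zero_unique.
  - lia.
  - intros j Hj. assert (2 ^ S j <= 2 ^ length s) by (apply Nat.pow_le_mono_r; lia). lia.
Qed.

Lemma prim_code_length k f : prim k f -> prim k (fun v => code_length (f v)).
Proof.
  apply prim_app1. unfold code_length.
  apply (prim_mu 1 (fun v => (nth 1 v 0 + 2) - 2 ^ S (nth 0 v 0))).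
  - apply prim_sub; [apply prim_add; [apply prim_proj; lia | apply prim_const]|].
    apply prim_pow2, prim_succ, prim_proj; lia.
  - intros v. exists (nth 0 v 0).
    assert (Hpow : forall n, n + 2 <= 2 ^ S n) by (induction n; simpl in *; lia).
    specialize (Hpow (nth 0 v 0)). cbn [nth] in *. lia.
Qed.

Definition leb_ind (a b : nat) : nat := 1 - (a - b).

Lemma leb_ind_spec a b : leb_ind a b = if a <=? b then 1 else 0.
Proof. unfold leb_ind. destruct (Nat.leb_spec a b); lia. Qed.

(* For [x >= 0], [ltz_ind x (zenc z)] tests [x < z] on the code of an integer [z]:
   positive integers have even nonzero codes, negative ones odd codes. *)
Definition ltz_ind (x c : nat) : nat := evenb c * (1 - ((2 * x + 2) - c)).

Lemma evenb_double n : evenb (2 * n) = 1 /\ evenb (S (2 * n)) = 0.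
Proof.
  induction n as [|n [Heven Hodd]]; [split; reflexivity|].
  replace (2 * S n) with (S (S (2 * n))) by lia. cbn [evenb]. rewrite Heven. auto.
Qed.

Lemma ltz_ind_spec (x : nat) (z : Z) :
  ltz_ind x (zenc z) = if Z.ltb (Z.of_nat x) z then 1 else 0.
Proof.
  unfold ltz_ind. destruct z as [|p|p]; cbn [zenc].
  - change (evenb 0) with 1. destruct (Z.ltb_spec (Z.of_nat x) 0); lia.
  - rewrite (proj1 (evenb_double (Pos.to_nat p))).
    destruct (Z.ltb_spec (Z.of_nat x) (Zpos p)); lia.
  - pose proof (Pos2Nat.is_pos p).
    replace (2 * Pos.to_nat p - 1) with (S (2 * (Pos.to_nat p - 1))) by lia.
    rewrite (proj2 (evenb_double (Pos.to_nat p - 1))).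
    destruct (Z.ltb_spec (Z.of_nat x) (Zneg p)); lia.
Qed.

Ltac prim_auto :=
  repeat first
   [ apply prim_unpair1 | apply prim_unpair2 | apply prim_code_length | apply prim_tri
   | apply prim_evenb | apply prim_pow2 | apply prim_mul | apply prim_add | apply prim_sub
   | apply prim_succ | apply prim_proj; lia | apply prim_const
   | apply prim_recursive; [eassumption|] ].

(* The level sets of the Schnorr test built from [T] and [rho]: [s] is in the
   [n]-th level when [rho |s| >= 2^n + 3] and the precision-1 approximation
   [q s 0] of [T s] exceeds [rho |s| - 2]. *)
Definition test_set (rho : nat -> nat) (q : list bool -> nat -> Q) (n : nat) (s : list bool)
  : bool :=
  (2 ^ n + 3 <=? rho (length s)) &&
  Z.ltb (Z.of_nat ((rho (length s) - 2) * Pos.to_nat (Qden (q s 0)))) (Qnum (q s 0)).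

(* The characteristic function of [test_set], on codes [npair n (senc s)], given a
   function [Fq] computing [q] on codes. *)
Definition test_set_code (Fq rho : nat -> nat) (m : nat) : nat :=
  leb_ind (2 ^ unpair1 m + 3) (rho (code_length (unpair2 m))) *
  ltz_ind ((rho (code_length (unpair2 m)) - 2) * S (unpair2 (Fq (tri (unpair2 m)))))
          (unpair1 (Fq (tri (unpair2 m)))).

Lemma test_set_code_spec Fq rho q n s :
  (forall s N, Fq (npair (senc s) N) = qenc (q s N)) ->
  test_set_code Fq rho (npair n (senc s)) = if test_set rho q n s then 1 else 0.
Proof.
  intros HFq. unfold test_set_code, test_set.
  rewrite unpair1_npair, unpair2_npair, code_length_senc.
  replace (tri (senc s)) with (npair (senc s) 0) by (rewrite npair_tri, !Nat.add_0_r; reflexivity).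
  rewrite HFq. unfold qenc. rewrite unpair1_npair, unpair2_npair.
  replace (S (Pos.to_nat (Qden (q s 0)) - 1)) with (Pos.to_nat (Qden (q s 0)))
    by (pose proof (Pos2Nat.is_pos (Qden (q s 0))); lia).
  rewrite ltz_ind_spec, leb_ind_spec.
  destruct (_ <=? _); [|reflexivity]. destruct Z.ltb; reflexivity.
Qed.

Lemma test_set_recursive rho q :
  recursive rho -> recursive_SNQ q -> recursive_set_NS (test_set rho q).
Proof.
  intros Hrho [Fq [HFq Hq]]. exists (test_set_code Fq rho). split.
  - apply recursive_prim1. unfold prim1, test_set_code, leb_ind, ltz_ind. prim_auto.
  - intros n s. apply test_set_code_spec, Hq.
Qed.

Definition test_modulus (rho : nat -> nat) (N _ : nat) : nat :=
  least_zero (fun l => (2 ^ N + 3) - rho l).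

Lemma test_modulus_recursive rho : growth_function rho -> recursive_NN (test_modulus rho).
Proof.
  intros [Hrho [_ Hunb]].
  exists (fun m => least_zero (fun l => (2 ^ unpair1 m + 3) - rho l)). split.
  - apply recursive_prim1.
    apply (prim_mu 1 (fun v => (2 ^ unpair1 (nth 1 v 0) + 3) - rho (nth 0 v 0))).
    + prim_auto.
    + intros v. destruct (Hunb (2 ^ unpair1 (nth 0 v 0) + 3)) as [l Hl].
      exists l. cbn [nth]. lia.
  - intros a b. unfold test_modulus. rewrite unpair1_npair. reflexivity.
Qed.

Lemma test_modulus_spec rho N n :
  growth_function rho -> 2 ^ N + 3 <= rho (test_modulus rho N n).
Proof.
  intros [_ [_ Hunb]]. unfold test_modulus.
  destruct (least_zero_spec (fun l => (2 ^ N + 3) - rho l)) as [Hzero _]; [|lia].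
  destruct (Hunb (2 ^ N + 3)) as [l Hl]. exists l. lia.
Qed.

Open Scope R_scope.

Lemma length_prefix w n : length (prefix w n) = n.
Proof. unfold prefix. rewrite length_map, length_seq. reflexivity. Qed.

Lemma firstn_prefix w k n : (k <= n)%nat -> firstn k (prefix w n) = prefix w k.
Proof.
  intros H. unfold prefix. rewrite firstn_map. f_equal.
  replace n with (k + (n - k))%nat by lia. rewrite seq_app, firstn_app.
  rewrite firstn_all2 by (rewrite length_seq; lia).
  rewrite length_seq, Nat.sub_diag. apply app_nil_r.
Qed.

Lemma firstn_app_le (s t : list bool) j : (j <= length s)%nat -> firstn j (s ++ t) = firstn j s.
Proof.
  intros H. rewrite firstn_app. replace (j - length s)%nat with 0%nat by lia.
  apply app_nil_r.
Qed.

Definition reached (T : list bool -> R) (c : R) (s : list bool) : Prop :=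
  exists j, (j <= length s)%nat /\ c <= T (firstn j s).

Lemma reached_app T c s x : reached T c s -> reached T c (s ++ [x]).
Proof.
  intros [j [Hj Hc]]. exists j. rewrite length_app, firstn_app_le by lia. split; [lia | exact Hc].
Qed.

Lemma reached_app_first T c s x :
  reached T c (s ++ [x]) -> ~ reached T c s -> c <= T (s ++ [x]).
Proof.
  intros [j [Hj Hc]] Hnot. rewrite length_app in Hj. simpl in Hj.
  destruct (le_lt_dec j (length s)) as [Hle|Hlt].
  - exfalso; apply Hnot. exists j. rewrite <- (firstn_app_le s [x]) by lia. auto.
  - rewrite firstn_all2 in Hc by (rewrite length_app; simpl; lia). exact Hc.
Qed.

Definition stopped (T : list bool -> R) (c : R) (s : list bool) : R :=
  if excluded_middle_informative (reached T c s) then 1 else T s / c.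

Section Ville.

Variables (phi : forecasting_system) (T : list bool -> R) (c : R).
Hypothesis HT : test_supermartingale phi T.
Hypothesis Hc : 1 <= c.

Lemma stopped_nonneg s : 0 <= stopped T c s.
Proof.
  destruct HT as [_ [Hpos _]]. unfold stopped.
  destruct excluded_middle_informative; [lra|].
  apply Rmult_le_pos; [apply Hpos | apply Rlt_le, Rinv_0_lt_compat; lra].
Qed.

Lemma stopped_le s : ~ reached T c s -> forall x, stopped T c (s ++ [x]) <= T (s ++ [x]) / c.
Proof.
  intros Hnot x. unfold stopped. destruct excluded_middle_informative as [Hr|]; [|lra].
  apply (Rmult_le_reg_r c); [lra|]. unfold Rdiv.
  rewrite Rmult_assoc, Rinv_l, Rmult_1_r by lra.
  pose proof (reached_app_first T c s x Hr Hnot). lra.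
Qed.

Lemma stopped_supermartingale : supermartingale phi (stopped T c).
Proof.
  intros s p Hp. destruct HT as [HS _].
  pose proof (ilo_ge0 (phi s)). pose proof (ihi_le1 (phi s)).
  unfold stopped at 3. destruct excluded_middle_informative as [Hr|Hnot].
  - assert (Hone : forall x, stopped T c (s ++ [x]) = 1).
    { intros x. unfold stopped.
      destruct excluded_middle_informative as [|Hn]; [reflexivity|].
      exfalso; exact (Hn (reached_app T c s x Hr)). }
    rewrite !Hone. lra.
  - apply Rle_trans with ((p * T (s ++ [true]) + (1 - p) * T (s ++ [false])) / c).
    + apply Rle_trans with (p * (T (s ++ [true]) / c) + (1 - p) * (T (s ++ [false]) / c)).
      * apply Rplus_le_compat; apply Rmult_le_compat_l; try apply stopped_le; auto; lra.
      * right. field. lra.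
    + apply Rmult_le_compat_r; [apply Rlt_le, Rinv_0_lt_compat; lra | exact (HS s p Hp)].
Qed.

(* The stopped process starts at [1/c] (when [c = 1] it is stopped at once). *)
Lemma stopped_nil : stopped T c [] = / c.
Proof.
  destruct HT as [_ [_ H1]]. unfold stopped.
  destruct excluded_middle_informative as [[j [Hj Hr]]|Hn].
  - simpl in Hj. replace j with 0%nat in Hr by lia. simpl in Hr.
    replace c with 1 by lra. field.
  - rewrite H1. field. lra.
Qed.

Lemma stopped_after_reach w k n :
  c <= T (prefix w k) -> (k <= n)%nat -> stopped T c (prefix w n) = 1.
Proof.
  intros Hk Hn. unfold stopped.
  destruct excluded_middle_informative as [|Hnot]; [reflexivity|].
  exfalso; apply Hnot. exists k. rewrite length_prefix, firstn_prefix by exact Hn. auto.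
Qed.

End Ville.

Lemma LimInf_seq_ge (u : nat -> R) a K :
  (forall n, (K <= n)%nat -> a <= u n) -> Rbar_le (Finite a) (LimInf_seq u).
Proof.
  intros H. rewrite <- (LimInf_seq_const a). apply LimInf_le. exists K. exact H.
Qed.

Lemma ville phi T c (G : Omega -> Prop) :
  test_supermartingale phi T -> 1 <= c ->
  (forall w, G w -> exists k, c <= T (prefix w k)) ->
  Rbar_le (upper_prob phi G) (Finite (/ c)).
Proof.
  intros HT Hc HG.
  destruct (Glb_Rbar_correct (upper_prob_set phi G)) as [Hlb _].
  apply Hlb. exists (stopped T c). split; [|split].
  - exact (stopped_supermartingale phi T c HT Hc).
  - intros w. split.
    + apply (LimInf_seq_ge _ _ 0). intros n _. exact (stopped_nonneg phi T c HT Hc _).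
    + intros Gw. destruct (HG w Gw) as [k Hk].
      apply (LimInf_seq_ge _ _ k). intros n Hn.
      rewrite (stopped_after_reach T c w k n Hk Hn). lra.
  - symmetry. exact (stopped_nil phi T c HT Hc).
Qed.

Lemma scaled_lt_iff (r : nat) (q : Q) : (2 <= r)%nat ->
  (Z.of_nat ((r - 2) * Pos.to_nat (Qden q)) < Qnum q)%Z <-> INR r - 2 < Q2R q.
Proof.
  intros Hr. set (D := IZR (Zpos (Qden q))).
  assert (HD : 0 < D) by (apply IZR_lt; lia).
  assert (E : IZR (Z.of_nat ((r - 2) * Pos.to_nat (Qden q))) = (INR r - 2) * D).
  { rewrite <- INR_IZR_INZ, mult_INR, minus_INR by lia.
    rewrite INR_IZR_INZ with (n := Pos.to_nat _), positive_nat_Z. reflexivity. }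
  unfold Q2R. fold D. split.
  - intros H. apply IZR_lt in H. rewrite E in H.
    apply (Rmult_lt_reg_r D); [lra|]. rewrite Rmult_assoc, Rinv_l, Rmult_1_r by lra. lra.
  - intros H. apply lt_IZR. rewrite E.
    apply (Rmult_lt_compat_r D) in H; [|lra].
    rewrite Rmult_assoc, Rinv_l, Rmult_1_r in H by lra. lra.
Qed.

Lemma INR_pow2 n : INR (2 ^ n) = 2 ^ n.
Proof. rewrite pow_INR. reflexivity. Qed.

Section SchnorrTest.

Variables (T : list bool -> R) (q : list bool -> nat -> Q) (rho : nat -> nat).
Hypothesis Happrox : forall s, Rabs (T s - Q2R (q s 0%nat)) <= 1.

Lemma test_set_sound n s : test_set rho q n s = true ->
  (2 ^ n + 3 <= rho (length s))%nat /\ INR (rho (length s)) - 3 < T s.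
Proof.
  unfold test_set. intros H. apply andb_prop in H as [Hlen Hq].
  apply Nat.leb_le in Hlen. apply Z.ltb_lt, scaled_lt_iff in Hq; [|lia].
  split; [exact Hlen|]. pose proof (Happrox s) as Ha. apply Rabs_le_between' in Ha. lra.
Qed.

Lemma test_set_complete n s :
  (2 ^ n + 3 <= rho (length s))%nat -> INR (rho (length s)) < T s -> test_set rho q n s = true.
Proof.
  intros Hlen HT. unfold test_set. apply andb_true_intro. split.
  - apply Nat.leb_le, Hlen.
  - apply Z.ltb_lt, scaled_lt_iff; [lia|].
    pose proof (Happrox s) as Ha. apply Rabs_le_between' in Ha. lra.
Qed.

Lemma test_set_large n N s : test_set rho q n s = true ->
  (2 ^ N + 3 <= rho (length s))%nat -> 2 ^ N <= T s.
Proof.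
  intros Hs HN. destruct (test_set_sound n s Hs) as [_ HT].
  apply le_INR in HN. rewrite plus_INR, INR_pow2 in HN. simpl in HN. lra.
Qed.

Lemma test_set_schnorr_test phi : test_supermartingale phi T -> recursive_SNQ q ->
  growth_function rho -> schnorr_test phi (test_set rho q) (test_modulus rho).
Proof.
  intros HT Hq Hrho. pose proof Hrho as [Hrec [Hmono _]].
  split; [|split; [|split]].
  - exact (test_set_recursive rho q Hrec Hq).
  - exact (test_modulus_recursive rho Hrho).
  - intros n. apply (ville phi T); [exact HT | apply pow_R1_Rle; lra|].
    intros w' [s [Hs Hp]]. exists (length s). rewrite Hp.
    apply (test_set_large n n s Hs), (test_set_sound n s Hs).
  - intros N n l Hl. apply (ville phi T); [exact HT | apply pow_R1_Rle; lra|].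
    intros w' [[s [Hs Hp]] Hshort]. exists (length s). rewrite Hp.
    destruct (le_lt_dec l (length s)) as [Hle|Hlt].
    + apply (test_set_large n N s Hs).
      pose proof (test_modulus_spec rho N n Hrho).
      pose proof (Hmono _ _ (Nat.le_trans _ _ _ Hl Hle)). lia.
    + exfalso; apply Hshort. exists s. repeat split; auto.
Qed.

Lemma test_set_covers w : growth_function rho ->
  (forall K, exists k, (K <= k)%nat /\ INR (rho k) < T (prefix w k)) ->
  forall n, cyl (sec (test_set rho q) n) w.
Proof.
  intros [_ [Hmono Hunb]] Hinf n.
  destruct (Hunb (2 ^ n + 3)%nat) as [K HK]. destruct (Hinf K) as [k [Hk Hexc]].
  exists (prefix w k). rewrite length_prefix. split; [|reflexivity].
  apply test_set_complete; rewrite length_prefix; [|exact Hexc].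
  pose proof (Hmono K k Hk). lia.
Qed.

End SchnorrTest.

Lemma exceeds_infinitely_often (u v : nat -> R) :
  ~ Rbar_le (LimSup_seq (fun n => u n - v n)) (Finite 0) ->
  forall K, exists k, (K <= k)%nat /\ v k < u k.
Proof.
  intros Hlimsup K. apply NNPP. intros Hno. apply Hlimsup.
  rewrite <- (LimSup_seq_const 0). apply LimSup_le. exists K. intros k Hk.
  destruct (Rle_dec (u k) (v k)); [lra|].
  exfalso; apply Hno; exists k; split; [exact Hk | lra].
Qed.

Theorem proposition8p1 (phi : forecasting_system) (w : Omega) :
  schnorr_test_random phi w -> schnorr_random phi w.
Proof.
  intros Hrandom T rho HT [q [Hq Happrox]] Hrho.
  apply NNPP. intros Hlimsup.
  assert (Happrox0 : forall s, Rabs (T s - Q2R (q s 0%nat)) <= 1).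
  { intros s. specialize (Happrox s 0%nat). simpl in Happrox. lra. }
  apply (Hrandom (test_set rho q) (test_modulus rho)).
  - exact (test_set_schnorr_test T q rho Happrox0 phi HT Hq Hrho).
  - apply (test_set_covers T q rho Happrox0 w Hrho).
    exact (exceeds_infinitely_often _ _ Hlimsup).
Qed.
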